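(* Let $A$, $Q$, $H\subseteq A^Q$ be non-empty finite sets, $n\ge3$, and $\mathcal F$ a clone with carrier $A$ satisfying $\Delta^s_n$, and suppose $H\in\mathrm{Inv}_Q\mathcal F$. Let $p,q\in Q$, $a\in H(p)$, $|H(q)|\ge n$, and suppose $H$ weakly separates $p$ from $q$ at the point $a$. Then $H$ strongly separates $p$ from $q$ at the point $a$.
   Context: $\mathcal O(A)=\bigcup_{n<\omega}A^{A^n}$; $\mathcal F_{[n]}=\mathcal F\cap A^{A^n}$; $\mathrm{ran}\,\mathbf x$ is the set of entries of $\mathbf x\in A^n$; $A^n_k=\{\mathbf x\in A^n:|\mathrm{ran}\,\mathbf x|=k\}$, $A^n_{<n}=\bigcup_{k<n}A^n_k$. A clone with carrier $A$ is a subset of $\mathcal O(A)$ containing all projections and closed under composition. For $f\in\mathcal O(A)_{[m]}$, $h_i\in A^Q$, $f(h_0,\dots,h_{m-1})$ is $q\mapsto f(h_0(q)\dots h_{m-1}(q))$; $\mathrm{Inv}_Q\mathcal F$ is the set of $H\subseteq A^Q$ closed under such compositions with $f\in\mathcal F$. $H(q)=\{h(q):h\in H\}$. $\mathcal F$ satisfies $\Delta^s_n$ if there is $i<n$ such that for every $\mathbf a\in A^n_n$ and $a\in\mathrm{ran}\,\mathbf a$ there is $s\in\mathcal F_{[n]}$ with $s(\mathbf a)=a$ and $s(\mathbf x)=x_i$ for all $\mathbf x\in A^n_{<n}$. $H$ weakly separates $p$ from $q$ at $a\in H(p)$ if there are $h_1,h_2\in H$ with $h_1(p)=h_2(p)=a$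 and $h_1(q)\ne h_2(q)$; $H$ strongly separates $p$ from $q$ at $a$ if for every $b\in H(q)$ there is $h\in H$ with $h(p)=a$, $h(q)=b$. *)

From mathcomp Require Import all_boot.
Set Implicit Arguments. Unset Strict Implicit. Unset Printing Implicit Defensive.

Definition op (A : Type) (n : nat) := ('I_n -> A) -> A.

Definition opset (A : Type) := forall n : nat, op A n -> Prop.

Definition is_clone (A : Type) (F : opset A) : Prop :=
  (forall (n : nat) (i : 'I_n), F n (fun x => x i)) /\
  (forall (n m : nat) (f : op A m) (gs : 'I_m -> op A n),
      F m f -> (forall j, F n (gs j)) ->
      F n (fun x => f (fun j => gs j x))).

Definition ran (A : finType) (n : nat) (x : 'I_n -> A) : {set A} :=
  [set x i | i : 'I_n].

Definition Delta_s (A : finType) (F : opset A) (n : nat) : Prop :=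
  exists i : 'I_n,
    forall (a : 'I_n -> A), #|ran a| = n ->
    forall c, c \in ran a ->
      exists s : op A n, F n s /\ s a = c /\
        (forall x : 'I_n -> A, #|ran x| < n -> s x = x i).

Definition Inv (A Q : finType) (F : opset A) (H : {set {ffun Q -> A}}) : Prop :=
  forall (m : nat) (f : op A m) (hs : 'I_m -> {ffun Q -> A}),
    F m f -> (forall j, hs j \in H) ->
    [ffun q => f (fun j => hs j q)] \in H.

Definition Hat (A Q : finType) (H : {set {ffun Q -> A}}) (q : Q) : {set A} :=
  [set (h : {ffun Q -> A}) q | h in H].

Definition weakly_separates (A Q : finType) (H : {set {ffun Q -> A}})
  (p q : Q) (a : A) : Prop :=
  exists h1 h2, [/\ h1 \in H, h2 \in H, h1 p = a, h2 p = a & h1 q != h2 q].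

Definition strongly_separates (A Q : finType) (H : {set {ffun Q -> A}})
  (p q : Q) (a : A) : Prop :=
  forall b, b \in Hat H q -> exists2 h, h \in H & h p = a /\ h q = b.

(* Take [h1], [h2] witnessing the weak separation, with [h1 q = c1 <> c2 = h2 q]
   and [h1 p = h2 p = a], and a target value [b] of [H(q)].  Complete
   [c1, c2, b] to [n] distinct values of [H(q)], realized by [n] members of [H]
   with [h1] in the distinguished coordinate [i] of [Delta^s_n] and [h2] in
   another one.  The [Delta^s_n] operation sending the injective tuple read at
   [q] to [b] acts as the projection onto [i] on the tuple read at [p], which
   repeats [a]; applied pointwise it yields a member of [H] mapping [p] to [a]
   and [q] to [b]. *)
From mathcomp Require Import all_boot zify.
From mathcomp Require Import fingroup perm.

Set Implicit Arguments.
Unset Strict Implicit.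
Unset Printing Implicit Defensive.

(* [Delta_s F n] is convertible to [exists i, Delta_s_at F i]. *)
Definition Delta_s_at (A : finType) (F : opset A) (n : nat) (i : 'I_n) : Prop :=
  forall (a : 'I_n -> A), #|ran a| = n ->
  forall c, c \in ran a ->
    exists s : op A n, F n s /\ s a = c /\
      (forall x : 'I_n -> A, #|ran x| < n -> s x = x i).

Section DistinctTuples.

Variable T : finType.

Lemma card_ran_inj (n : nat) (x : 'I_n -> T) : injective x -> #|ran x| = n.
Proof. by move=> x_inj; rewrite card_imset // card_ord. Qed.

Lemma card_ran_lt (n : nat) (x : 'I_n -> T) (i j : 'I_n) :
  i != j -> x i = x j -> #|ran x| < n.
Proof.
move=> ij xij; rewrite -[n in _ < n]card_ord ltn_neqAle leq_imset_card andbT.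
apply/negP => /imset_injP x_inj.
by move: ij; rewrite (x_inj i j) ?inE ?eqxx.
Qed.

Lemma uniq_extend (S : {set T}) (s : seq T) (n : nat) :
  uniq s -> {subset s <= S} -> size s <= n <= #|S| ->
  exists r, [/\ uniq (s ++ r), size (s ++ r) = n & {subset s ++ r <= S}].
Proof.
move=> us sS /andP [sn nS].
have : n - size s <= #|S :\: [set x in s]|.
  have sS' : [set x in s] \subset S by apply/subsetP => x; rewrite inE => /sS.
  by rewrite cardsD (setIidPr sS') cardsE (card_uniqP us) leq_sub2r.
case/card_geqP => r [ur sr rS].
exists r; split.
- rewrite cat_uniq us ur andbT; apply/hasPn => x /rS.
  by rewrite in_setD inE => /andP [].
- by rewrite size_cat sr; lia.
- by move=> x; rewrite mem_cat => /orP [/sS // | /rS]; rewrite in_setD => /andP [].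
Qed.

Lemma distinct_tuple_through (S : {set T}) (n : nat) (i : 'I_n) (c1 c2 b : T) :
  uniq [:: c1; c2; b] -> {subset [:: c1; c2; b] <= S} -> 3 <= n <= #|S| ->
  exists x : 'I_n -> T, [/\ injective x, forall k, x k \in S, x i = c1,
    (exists2 j, j != i & x j = c2) & b \in ran x].
Proof.
move=> u3 sub3 nS.
have [r [us sz sS]] := uniq_extend u3 sub3 nS.
have [n0 n1 n2] : [/\ 0 < n, 1 < n & 2 < n] by move/andP: nS => [? _]; split; lia.
pose pi := tperm i (Ordinal n0).
pose x k := nth c1 ([:: c1; c2; b] ++ r) (pi k).
have x_pi k : x (pi k) = nth c1 ([:: c1; c2; b] ++ r) k by rewrite /x tpermK.
exists x; split.
- move=> k l /eqP; rewrite /x nth_uniq ?sz ?ltn_ord //.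
  by move/eqP/val_inj/perm_inj.
- by move=> k; apply: sS; rewrite mem_nth // sz ltn_ord.
- by rewrite /x tpermL.
- exists (pi (Ordinal n1)); last exact: x_pi.
  apply/eqP => ji; have := x_pi (Ordinal n1).
  by rewrite ji /x tpermL /= => c12; move: u3; rewrite c12 /= inE eqxx.
- by apply/imsetP; exists (pi (Ordinal n2)); rewrite ?x_pi.
Qed.

End DistinctTuples.

Section InvariantRelations.

Variables (A Q : finType) (F : opset A) (H : {set {ffun Q -> A}}).

Lemma Hat_lift (n : nat) (q : Q) (x : 'I_n -> A) (i j : 'I_n)
    (h1 h2 : {ffun Q -> A}) :
  (forall k, x k \in Hat H q) -> j != i ->
  h1 \in H -> h2 \in H -> h1 q = x i -> h2 q = x j ->
  exists hs : 'I_n -> {ffun Q -> A},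
    [/\ forall k, hs k \in H, forall k, hs k q = x k, hs i = h1 & hs j = h2].
Proof.
move=> xH ji h1H h2H h1q h2q.
pose g k := odflt h1 [pick h in H | h q == x k].
have gH k : g k \in H /\ g k q = x k.
  rewrite /g; case: pickP => [h /andP [hH /eqP] // | none].
  by case/imsetP: (xH k) => h hH hq; move: (none h); rewrite hH -hq eqxx.
exists (fun k => if k == i then h1 else if k == j then h2 else g k).
split=> [k|k||]; rewrite ?eqxx ?(negbTE ji) //.
- by case: eqP => // _; case: eqP => // _; case: (gH k).
- by case: eqP => [->|_] //; case: eqP => [->|_] //; case: (gH k).
Qed.

Lemma Inv_Delta_s_realize (n : nat) (i j : 'I_n) (hs : 'I_n -> {ffun Q -> A})
    (p q : Q) (b : A) :
  Inv F H -> Delta_s_at F i ->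
  (forall k, hs k \in H) -> injective (fun k => hs k q) ->
  j != i -> hs j p = hs i p -> b \in ran (fun k => hs k q) ->
  exists2 h, h \in H & h p = hs i p /\ h q = b.
Proof.
move=> InvH Di hsH inj_q ji hs_p b_ran.
have [s [Fs [s_q s_p]]] := Di _ (card_ran_inj inj_q) b b_ran.
exists [ffun r => s (fun k => hs k r)]; first exact: InvH.
by rewrite !ffunE s_q s_p //; apply: card_ran_lt ji hs_p.
Qed.

End InvariantRelations.

Theorem lemma4 (A Q : finType) (H : {set {ffun Q -> A}}) (n : nat)
  (F : opset A) (p q : Q) (a : A) :
  0 < #|A| -> 0 < #|Q| -> H != set0 ->
  3 <= n -> is_clone F -> Delta_s F n -> Inv F H ->
  a \in Hat H p -> n <= #|Hat H q| ->
  weakly_separates H p q a -> strongly_separates H p q a.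
Proof.
move=> _ _ _ n3 _ [i Di] InvH _ nHq [h1 [h2 [h1H h2H h1p h2p c12]]] b bHq.
have [bc1|bc1] := eqVneq b (h1 q); first by exists h1.
have [bc2|bc2] := eqVneq b (h2 q); first by exists h2.
have hHq h : h \in H -> h q \in Hat H q by move=> hH; apply/imsetP; exists h.
have u3 : uniq [:: h1 q; h2 q; b] by rewrite /= !inE negb_or c12 eq_sym bc1 eq_sym bc2.
have sub3 : {subset [:: h1 q; h2 q; b] <= Hat H q}.
  by move=> c; rewrite !inE => /or3P [] /eqP ->; rewrite ?hHq.
have nS : 3 <= n <= #|Hat H q| by rewrite n3.
have [x [x_inj xHq xi [j ji xj] bx]] := distinct_tuple_through i u3 sub3 nS.
have [hs [hsH hs_q hs_i hs_j]] :=
  Hat_lift xHq ji h1H h2H (esym xi) (esym xj).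
have hs_inj : injective (fun k => hs k q) by move=> k l; rewrite !hs_q => /x_inj.
have hs_p : hs j p = hs i p by rewrite hs_i hs_j h1p h2p.
have b_ran : b \in ran (fun k => hs k q) by rewrite /ran (eq_imset _ hs_q).
have [h hH [hp hq]] := Inv_Delta_s_realize InvH Di hsH hs_inj ji hs_p b_ran.
by exists h; rewrite // hp hs_i.
Qed.
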